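(* Let $p$ be prime and $H\le\mathrm{S}_n$ be in $\mathfrak{InP}(\mathrm{C}_p)$ with $|H|=p^s$, let $\gamma$ be as in the context, and let $M\in\mathrm{M}(s,k,p)$ be a generator matrix of $\gamma(H)$. Let $\beta$ be a point in the $H$-orbit $\Omega_j$. If the column $M_{*,j}$ is non-zero in exactly one row, say row $i$, then $\gamma(H_\beta)$ is the row space of the matrix obtained from $M$ by deleting row $i$.
   Context: $H\le\mathrm{S}_{n}$, $n=pk$, has orbits $\Omega_1,\dots,\Omega_k$ of size $p$ with each $G_i:=H|_{\Omega_i}$ cyclic of order $p$; $G=G_1\times\dots\times G_k$, $g_i$ a generator of $G_i$, and $\gamma:G\to\mathbb{F}_p^k$ the isomorphism $\gamma(g_1^{r_1}\cdots g_k^{r_k})=(r_1,\dots,r_k)$. A generator matrix of $\gamma(H)$ is an $s\times k$ matrix over $\mathbb{F}_p$ whose rows form a basis of $\gamma(H)$. $H_\beta$ is the point stabiliser. *)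

From mathcomp Require Import all_boot all_algebra all_fingroup all_solvable.
Set Implicit Arguments. Unset Strict Implicit. Unset Printing Implicit Defensive.

Definition gammaInv (p n k : nat) (g : 'I_k -> {perm 'I_n}) (r : 'rV['F_p]_k)
  : {perm 'I_n} :=
  (\prod_(i < k) (g i ^+ (nat_of_ord (r ord0 i))))%g.

Definition gamma (p n k : nat) (g : 'I_k -> {perm 'I_n}) (x : {perm 'I_n})
  : 'rV['F_p]_k :=
  odflt 0%R [pick r : 'rV['F_p]_k | gammaInv g r == x].

From mathcomp Require Import all_boot all_algebra all_fingroup all_solvable.
Import GRing.Theory.

(* On the orbit Om_l the permutation gammaInv r acts as g_l^(r_l), so gamma
   inverts gammaInv and gammaInv r fixes a point beta of Om_j iff g_j^(r_j)
   does.  A nonzero power of g_j generates <g_j> = H|Om_j, which is transitive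
   on the p >= 2 points of Om_j and hence fixes none of them; so gamma(H_beta)
   consists of the vectors of gamma(H) with j-th coordinate 0.  As column j of
   M is supported on row i alone, these are the combinations of the rows of M
   other than row i. *)

Lemma ltn_Fp p (e : 'F_p) : prime p -> e < p.
Proof. by move=> p_pr; rewrite -[p in _ < p](Fp_cast p_pr). Qed.

Lemma prod_perm_on_disjointE {I T : finType} (A : I -> {set T})
    (F : I -> {perm T}) (l : I) (y : T) (s : seq I) :
  (forall m, perm_on (A m) (F m)) ->
  (forall m m' z, z \in A m -> z \in A m' -> m = m') ->
  y \in A l -> uniq s ->
  (\prod_(m <- s) F m)%g y = if l \in s then F l y else y.
Proof.
move=> F_on A_disj; elim: s y => [|a s IHs] y yl /=; first by rewrite big_nil perm1.
rewrite big_cons permM in_cons; have [<-|la] /= := eqVneq l a.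
  by case/andP=> l_s s_uniq; rewrite IHs ?perm_closed // (negbTE l_s).
case/andP=> _ s_uniq; rewrite (out_perm (F_on a)) ?IHs //.
by apply: contra la => ya; rewrite (A_disj _ _ _ yl ya).
Qed.

Lemma restr_perm_orbit_transitive {T : finType} {H : {group {perm T}}} {x y z : T} :
  y \in orbit 'P H x -> z \in orbit 'P H x ->
  exists2 h, h \in (restr_perm (orbit 'P H x) @* H)%g & h y = z.
Proof.
move=> /orbit_eqP <- /orbitP [h hH <-].
have hN : h \in 'N(orbit 'P H y | 'P)%g.
  exact: subsetP (acts_orbit _ _ (subsetT H)) h hH.
by exists (restr_perm (orbit 'P H y) h); rewrite ?mem_morphim ?restr_permE ?orbit_refl.
Qed.

Section RowDeletion.
Local Open Scope ring_scope.

Lemma submx_row'E {F : fieldType} {m n : nat} (M : 'M[F]_(m, n)) (i : 'I_m)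
    (j : 'I_n) (v : 'rV_n) :
  (forall i', (M i' j != 0) = (i' == i)) ->
  (v <= row' i M)%MS = (v <= M)%MS && (v 0 j == 0).
Proof.
move=> col_j.
have col_j0 i' : i' != i -> M i' j = 0 by rewrite -col_j => /negPn/eqP.
have row'_row l : row l (row' i M) = row (lift i l) M by apply/rowP => c; rewrite !mxE.
have row'M : (row' i M <= M)%MS by apply/row_subP => l; rewrite row'_row row_sub.
apply/idP/andP => [v_sub | [/submxP [a ->] /eqP v_j0]].
  split; first exact: submx_trans v_sub row'M.
  case/submxP: v_sub => a ->; rewrite mxE big1 // => l _.
  by rewrite mxE col_j0 ?mulr0 // eq_sym neq_lift.
have a_i0 : a 0 i = 0.
  move: v_j0; rewrite mxE (bigD1 i) //= big1 => [|l li]; last by rewrite col_j0 ?mulr0.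
  have M_ij : M i j != 0 by rewrite col_j.
  by rewrite addr0 => /eqP; rewrite mulf_eq0 (negbTE M_ij) orbF => /eqP.
rewrite mulmx_sum_row summx_sub // => l _.
have [l' ->|->] := unliftP i l; last by rewrite a_i0 scale0r sub0mx.
by rewrite scalemx_sub // -row'_row row_sub.
Qed.

End RowDeletion.

Section OrbitCoordinates.

Variables (p n k : nat) (H : {group {perm 'I_n}}).
Variables (Om : 'I_k -> {set 'I_n}) (g : 'I_k -> {perm 'I_n}).
Hypothesis p_pr : prime p.
Hypothesis Om_inj : injective Om.
Hypothesis orbitsE : [set orbit 'P H x | x : 'I_n] = [set Om l | l : 'I_k].
Hypothesis cycle_gE : forall l, <[g l]>%g = (restr_perm (Om l) @* H)%g.
Hypothesis order_g : forall l, #[g l]%g = p.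

Lemma Om_orbit l : exists x, Om l = orbit 'P H x.
Proof.
have : Om l \in [set Om l | l : 'I_k] by apply: imset_f.
by rewrite -orbitsE => /imsetP [x _ ->]; exists x.
Qed.

Lemma Om_disjoint a l y : y \in Om a -> y \in Om l -> a = l.
Proof.
have [[xa Oa] [xl Ol]] := (Om_orbit a, Om_orbit l).
rewrite Oa Ol => /orbit_eqP ya /orbit_eqP yl.
by apply: Om_inj; rewrite Oa Ol -ya -yl.
Qed.

Lemma perm_on_gX l e : perm_on (Om l) (g l ^+ e)%g.
Proof.
have : (g l ^+ e)%g \in (restr_perm (Om l) @* H)%g by rewrite -cycle_gE mem_cycle.
by case/morphimP => x _ _ ->; apply: restr_perm_on.
Qed.

Lemma gammaInvE (r : 'rV['F_p]_k) l y :
  y \in Om l -> gammaInv g r y = (g l ^+ r ord0 l)%g y.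
Proof.
move=> yl; rewrite /gammaInv (prod_perm_on_disjointE Om _ l) ?mem_index_enum //.
- by move=> m; apply: perm_on_gX.
- exact: Om_disjoint.
- exact: index_enum_uniq.
Qed.

Lemma gammaInv_inj : injective (@gammaInv p n k g).
Proof.
move=> r1 r2 r12; apply/rowP => l.
have gX12 : (g l ^+ r1 ord0 l)%g = (g l ^+ r2 ord0 l)%g.
  apply/permP => y; have [yl|yNl] := boolP (y \in Om l).
    by rewrite -!gammaInvE // r12.
  by rewrite !(out_perm (perm_on_gX _ _)).
apply/val_inj/eqP; move/eqP: gX12.
by rewrite eq_expg_mod_order order_g !modn_small ?ltn_Fp.
Qed.

Lemma gammaInvK : cancel (@gammaInv p n k g) (gamma p g).
Proof.
move=> r; rewrite /gamma; case: pickP => [r' /eqP /gammaInv_inj -> //|].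
by move/(_ r); rewrite eqxx.
Qed.

Lemma gamma1 : gamma p g 1%g = 0%R.
Proof.
suff <- : gammaInv g (0%R : 'rV['F_p]_k) = 1%g by rewrite gammaInvK.
by rewrite /gammaInv big1 // => m _; rewrite mxE expg0.
Qed.

Lemma gamma_eq0_or_gammaInvK x : gamma p g x = 0%R \/ gammaInv g (gamma p g x) = x.
Proof. by rewrite /gamma; case: pickP => [r /eqP|]; [right | left]. Qed.

Lemma gX_fixed_eq0 l beta :
  beta \in Om l -> 1 < #|Om l| ->
  forall e : 'F_p, (g l ^+ e)%g beta = beta -> e = 0%R.
Proof.
move=> bl Om_gt1 e e_fix; apply/eqP; apply: contraTT Om_gt1 => e_neq0.
have e_gt0 : 0 < e by rewrite lt0n; apply: contra e_neq0 => /eqP e0; apply/eqP/val_inj.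
have gen_e : generator <[g l]> (g l ^+ e).
  by rewrite generator_coprime order_g prime_coprime // gtnNdvd ?ltn_Fp.
have [x Ox] := Om_orbit l.
rewrite -leqNgt; apply/card_le1_eqP => c1 c2.
suff c_beta c : c \in Om l -> c = beta by move=> /c_beta -> /c_beta ->.
rewrite Ox in bl * => cl.
have [h] := restr_perm_orbit_transitive bl cl.
rewrite -Ox -cycle_gE (eqP gen_e) => /cycleP [m ->] <-.
by rewrite permX; elim: m => //= m ->.
Qed.

Lemma gamma_stabE j beta (r : 'rV['F_p]_k) :
  beta \in Om j -> 1 < #|Om j| ->
  (r \in [set gamma p g x | x in ('C_H[beta | 'P])%g])
    = (r \in [set gamma p g x | x in H]) && (r ord0 j == 0%R).
Proof.
move=> bj Om_gt1; apply/imsetP/andP => [[x /setIP [xH /astab1P x_fix] ->] | ].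
  split; first exact: imset_f.
  have [-> | gammaK] := gamma_eq0_or_gammaInvK x; first by rewrite mxE.
  apply/eqP/(gX_fixed_eq0 _ _ bj Om_gt1).
  by rewrite -gammaInvE // gammaK.
case=> /imsetP [x xH ->] /eqP xj0.
have [-> | gammaK] := gamma_eq0_or_gammaInvK x; first by exists 1%g; rewrite ?group1 ?gamma1.
exists x => //; rewrite inE xH; apply/astab1P.
by rewrite /= apermE -gammaK (gammaInvE _ j) // xj0 expg0 perm1.
Qed.

End OrbitCoordinates.

Theorem lemma5p1 (p n k s : nat) (H : {group {perm 'I_n}})
  (Om : 'I_k -> {set 'I_n}) (g : 'I_k -> {perm 'I_n})
  (M : 'M['F_p]_(s, k)) (beta : 'I_n) (i : 'I_s) (j : 'I_k) :
  prime p -> n = (p * k)%N ->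
  (* the H-orbits are exactly Om_1, ..., Om_k, each of size p *)
  injective Om ->
  [set orbit 'P H x | x : 'I_n] = [set Om l | l : 'I_k] ->
  (forall l, #|Om l| = p) ->
  (* each restriction G_l = H|_{Om_l} is cyclic of order p, generated by g_l *)
  (forall l, cyclic (restr_perm (Om l) @* H)%g /\ #|(restr_perm (Om l) @* H)%g| = p) ->
  (forall l, <[g l]>%g = (restr_perm (Om l) @* H)%g) ->
  #|H| = (p ^ s)%N ->
  (* M is a generator matrix of gamma(H) *)
  row_free M ->
  (forall r : 'rV['F_p]_k, (r <= M)%MS = (r \in [set gamma p g x | x in H])) ->
  beta \in Om j ->
  (forall i' : 'I_s, (M i' j != 0%R) = (i' == i)) ->
  forall r : 'rV['F_p]_k,
    (r \in [set gamma p g x | x in ('C_H[beta | 'P])%g]) = (r <= row' i M)%MS.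
Proof.
move=> p_pr _ Om_inj orbitsE Om_card restrH cycle_gE _ _ M_gamma bj col_j r.
have order_g l : #[g l]%g = p by rewrite /order cycle_gE; case: (restrH l).
have Om_gt1 : 1 < #|Om j| by rewrite Om_card prime_gt1.
rewrite (@gamma_stabE _ _ _ _ _ _ p_pr Om_inj orbitsE cycle_gE order_g j beta) //.
by rewrite -M_gamma (submx_row'E _ _ j).
Qed.
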